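(* Let $S$ be a tree and define $P_S:\mathbb N\to\mathbb N$ by $P_S(n)=sh(S,L_n)$. Then there is a polynomial with rational coefficients, of degree $|S|$ and leading coefficient $(S!)^{-1}$, whose value at every $n\in\mathbb N$ equals $P_S(n)$. Here $|S|$ is the number of vertices of $S$ and $$S!=\prod_{v\in V(S)}|S_v|,$$ where $S_v$ is the maximal subtree of $S$ having $v$ as its root vertex and $|S_v|$ its number of vertices.
   Context: A tree is a finite connected graph without cycles whose external edges are open. One external edge is the root; the others are leaves. Each vertex has one outgoing edge (towards the root) and a strictly positive number of incoming edges. No planar structure. $V(S)$ is the vertex set. For a vertex $v$, $S_v$ consists of the outgoing edge of $v$ together with all edges above it. $L_n$ denotes the linear tree with $n$ vertices, all of valence $1$ ($L_0=\eta$, the tree with one edge and no vertices). Shuffle: for trees $S,T$ with root edges $r_S,r_T$, a shuffle is a tree $A$ with edges labelled by pairs $(s,t)\in E(S)\times E(T)$ such that: (1) the root of $A$ is labelled $(r_S,r_T)$; (2) the labelling restricts to a bijection from leaves of $A$ onto $\mathrm{Leaves}(S)\times\mathrm{Leaves}(T)$; (3) if an edge labelled $(s,t)$ is not a leaf, the incoming edges of the vertex of $A$ above it are labelled either exactly $(s_1,t),\dots,(s_m,t)$ for $s_1,\dots,s_m$ the edges immediately above $s$ in $S$, or exactly $(s,t_1),\dots,(s,t_n)$ for $t_1,\dots,t_n$ the edges immediately above $t$ in $T$. Shuffles are taken up to isomorphism of labelled trees; $sh(S,T)$ is their number. *)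

From HB Require Import structures.
From mathcomp Require Import all_boot all_order all_algebra.
From Stdlib Require List Permutation.
Set Implicit Arguments. Unset Strict Implicit. Unset Printing Implicit Defensive.

(* Rooted trees, represented by their root edge:
   [Eta] is an edge with no vertex above it (an open/leaf edge);
   [Vx ts] is an edge whose upper endpoint is a vertex with incoming edges ts.
   The planar order of [ts] is irrelevant for all notions below. *)
Inductive tree : Type := Eta | Vx of seq tree.

Fixpoint wf (t : tree) : bool :=
  match t with Eta => true | Vx ts => ~~ nilp ts && all wf ts end.

Fixpoint nvert (t : tree) : nat :=
  match t with Eta => 0 | Vx ts => (sumn (map nvert ts)).+1 end.

(* S! = prod_{v in V(S)} |S_v|; the vertex at the top of the root edge of
   [Vx ts] has S_v = Vx ts, the other vertices are those of the subtrees ts *)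
Fixpoint tfact (t : tree) : nat :=
  match t with Eta => 1 | Vx ts => nvert t * foldr muln 1 (map tfact ts) end.

Fixpoint lin (n : nat) : tree := if n is n'.+1 then Vx [:: lin n'] else Eta.

(* Edges of a tree are addressed by paths from the root (root edge = [::]). *)
Fixpoint sub (t : tree) (p : seq nat) : option tree :=
  match p with
  | [::] => Some t
  | i :: p' => match t with
               | Eta => None
               | Vx ts => if i < size ts then sub (nth Eta ts i) p' else None
               end
  end.

Definition is_edge (t : tree) (p : seq nat) : bool :=
  if sub t p is Some _ then true else false.
Definition is_leaf (t : tree) (p : seq nat) : bool :=
  if sub t p is Some Eta then true else false.
Definition above (t : tree) (p : seq nat) : seq (seq nat) :=
  if sub t p is Some (Vx ts) then [seq rcons p i | i <- iota 0 (size ts)] else [::].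

(* Labelled (non-planar) trees, again represented by their root edge:
   [LT l cs] is an edge labelled l; cs = [::] means it is a leaf edge,
   otherwise cs are the incoming edges of the vertex above it. *)
Inductive ltree (L : Type) : Type := LT of L & seq (ltree L).

Definition lab L (a : ltree L) : L := let: LT l _ := a in l.

Fixpoint labels L (a : ltree L) : seq L :=
  let: LT l cs := a in l :: flatten (map (@labels L) cs).

Fixpoint leaf_labels L (a : ltree L) : seq L :=
  let: LT l cs := a in
  if cs is [::] then [:: l] else flatten (map (@leaf_labels L) cs).

Fixpoint all_nodes L (P : L -> seq L -> bool) (a : ltree L) : bool :=
  let: LT l cs := a in P l (map (@lab L) cs) && all (all_nodes P) cs.

Inductive liso (L : Type) : ltree L -> ltree L -> Prop :=
| liso_intro (l : L) (cs cs' cs'' : seq (ltree L)) :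
    Permutation.Permutation cs' cs'' -> List.Forall2 (@liso L) cs cs'' ->
    liso (LT l cs) (LT l cs').

Definition label := (seq nat * seq nat)%type.

Definition is_shuffle (S T : tree) (A : ltree label) : Prop :=
  [/\ lab A = ([::], [::]),
      (forall x, x \in labels A -> is_edge S x.1 && is_edge T x.2),
      uniq (leaf_labels A),
      (forall s t, ((s, t) \in leaf_labels A) = is_leaf S s && is_leaf T t) &
      all_nodes (fun x ls =>
        let: (s, t) := x in
        [|| ls == [::],
            perm_eq ls [seq (s', t) | s' <- above S s]
          | perm_eq ls [seq (s, t') | t' <- above T t]]) A].

Definition num_classes (X : Type) (P : X -> Prop) (R : X -> X -> Prop) (k : nat) :=
  exists f : 'I_k -> X,
    [/\ forall i, P (f i),
        forall i j, R (f i) (f j) -> i = j &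
        forall x, P x -> exists i, R x (f i)].

Definition sh_is (S T : tree) (k : nat) : Prop :=
  num_classes (is_shuffle S T) (@liso label) k.

(* Reading a shuffle of [S] with [L_n] from its root edge, each edge either
   passes a vertex of [L_n], or passes a vertex of [S] and splits into one edge
   per child, each child continuing as a shuffle of its subtree with the part of
   [L_n] still above.  Listing the children in the planar order of [S] picks one
   representative per isomorphism class, whence the recurrence
     sh(Eta, L_r) = 1,   sh(Vx ts, L_r) = sum_(j <= r) prod_(t in ts) sh(t, L_j),
   where [j] vertices of [L_r] lie above the root vertex of [S].  Products of
   polynomial functions add degrees and multiply leading coefficients, and the
   partial sums of a polynomial of degree [d] and leading coefficient [a] form a
   polynomial of degree [d + 1] and leading coefficient [a / (d + 1)]; since
   [|S| = 1 + sum |t|] and [S! = |S| prod t!], induction on [S] concludes. *)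

From HB Require Import structures.
From mathcomp Require Import all_boot all_order all_algebra.
From mathcomp Require Import ring.
From Stdlib Require List Permutation.
Import GRing.Theory Num.Theory.
Set Implicit Arguments. Unset Strict Implicit. Unset Printing Implicit Defensive.

Definition tree_forall_ind (P : tree -> Prop) (P_Eta : P Eta)
    (P_Vx : forall ts, List.Forall P ts -> P (Vx ts)) : forall t, P t :=
  fix IH t := if t is Vx ts then
    P_Vx ts ((fix IHs ts : List.Forall P ts :=
      if ts is t :: ts' then List.Forall_cons t (IH t) (IHs ts') else List.Forall_nil P) ts)
  else P_Eta.

Lemma tree_nth_ind (P : tree -> Prop) : P Eta ->
  (forall ts, (forall i, i < size ts -> P (nth Eta ts i)) -> P (Vx ts)) ->
  forall t, P t.
Proof.
move=> P_Eta P_Vx; elim/tree_forall_ind => // ts IH; apply: P_Vx.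
by elim: IH => // t ts0 Pt _ IH [|i] //= /IH.
Qed.

Definition ltree_forall_ind (L : Type) (P : ltree L -> Prop)
    (P_LT : forall l cs, List.Forall P cs -> P (LT l cs)) : forall a, P a :=
  fix IH a := let: LT l cs := a in
    P_LT l cs ((fix IHs cs : List.Forall P cs :=
      if cs is c :: cs' then List.Forall_cons c (IH c) (IHs cs') else List.Forall_nil P) cs).

Section LtreeEqType.
Variable L : eqType.

Fixpoint ltree_eqb (a b : ltree L) : bool :=
  let: LT l cs := a in let: LT l' cs' := b in (l == l') && all2 ltree_eqb cs cs'.

Lemma ltree_eqP : Equality.axiom ltree_eqb.
Proof.
move=> a b; apply: (iffP idP) => [|<-].
  elim/ltree_forall_ind: a b => l cs IH [l' cs'] /= /andP[/eqP <-].
  by elim: IH cs' => [|c cs0 IHc _ IHcs] [|c' cs'] //= /andP[/IHc -> /IHcs [->]].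
elim/ltree_forall_ind: a => l cs IH /=; rewrite eqxx.
by elim: IH => //= c cs0 -> _.
Qed.

HB.instance Definition _ := hasDecEq.Build (ltree L) ltree_eqP.

Lemma ltree_ind (P : ltree L -> Prop) :
  (forall l cs, (forall c, c \in cs -> P c) -> P (LT l cs)) -> forall a, P a.
Proof.
move=> P_LT; elim/ltree_forall_ind => l cs IH; apply: P_LT.
by elim: IH => // c cs0 Pc _ IH x; rewrite inE => /orP[/eqP -> // | /IH].
Qed.

End LtreeEqType.

Section SeqFacts.
Variables (X : Type) (T : eqType).
Implicit Types (f : X -> seq T) (xs : seq X).

Lemma flatten_map_nthP f x0 xs y :
  reflect (exists2 i, i < size xs & y \in f (nth x0 xs i)) (y \in flatten (map f xs)).
Proof.
elim: xs => [|x xs IH] /=; first by rewrite in_nil; constructor => -[].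
rewrite mem_cat; apply: (iffP orP) => [[y_x | /IH [i lt_i y_i]] | [[|i] lt_i y_i]].
- by exists 0.
- by exists i.+1.
- by left.
- by right; apply/IH; exists i.
Qed.

Lemma uniq_flatten_map_nth f x0 xs :
  (forall i, i < size xs -> uniq (f (nth x0 xs i))) ->
  (forall i j y, i < size xs -> j < size xs ->
     y \in f (nth x0 xs i) -> y \in f (nth x0 xs j) -> i = j) ->
  uniq (flatten (map f xs)).
Proof.
elim: xs => [|x xs IH] //= uniq_f disj; rewrite cat_uniq (uniq_f 0) //=.
rewrite IH => [|i|i j y lt_i lt_j y_i y_j]; last 2 first.
- exact: (uniq_f i.+1).
- by have [] := disj i.+1 j.+1 y lt_i lt_j y_i y_j.
rewrite andbT; apply/hasPn => y /(flatten_map_nthP _ x0) [j lt_j y_j].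
by apply/negP => /(disj 0 j.+1 y isT lt_j)/(_ y_j).
Qed.

End SeqFacts.

Fixpoint cart_prod (X : Type) (ls : seq (seq X)) : seq (seq X) :=
  if ls is l :: ls' then [seq x :: y | x <- l, y <- cart_prod ls'] else [:: [::]].

Lemma size_cart_prod (X : Type) (ls : seq (seq X)) :
  size (cart_prod ls) = foldr muln 1 (map size ls).
Proof. by elim: ls => //= l ls IH; rewrite size_allpairs IH. Qed.

Lemma mem_cart_prod (X : eqType) (x0 : X) (ls : seq (seq X)) xs :
  xs \in cart_prod ls <->
  size xs = size ls /\ forall i, i < size ls -> nth x0 xs i \in nth [::] ls i.
Proof.
elim: ls xs => [|l ls IH] xs /=.
  by rewrite inE; split => [/eqP -> | [/size0nil ->]].
split => [/allpairsP [[x y] /= [x_l /IH [size_y y_ls] ->]] | [size_xs xs_ls]].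
  by split => [|[|i] //=]; [rewrite /= size_y | exact: y_ls].
case: xs size_xs xs_ls => // x xs [size_xs] xs_ls; apply/allpairsP; exists (x, xs).
by split => //; [exact: (xs_ls 0) | apply/IH; split => // i; exact: (xs_ls i.+1)].
Qed.

Lemma cart_prod_uniq (X : eqType) (ls : seq (seq X)) : all uniq ls -> uniq (cart_prod ls).
Proof.
elim: ls => //= l ls IH /andP[uniq_l /IH uniq_ls].
by apply: allpairs_uniq => // -[x y] [x' y'] _ _ /= [-> ->].
Qed.

Fixpoint mapi (A B : Type) (f : nat -> A -> B) (i : nat) (s : seq A) : seq B :=
  if s is a :: s' then f i a :: mapi f i.+1 s' else [::].

Lemma mapiE (A B : Type) (f : nat -> A -> B) (a0 : A) i s :
  mapi f i s = [seq f (i + j) (nth a0 s j) | j <- iota 0 (size s)].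
Proof.
elim: s i => //= a s IH i; rewrite addn0 IH (iotaDl 1 0) -map_comp.
by congr (_ :: _); apply/eq_map => j /=; rewrite addSnnS.
Qed.

Lemma nth_choice (Y : Type) (P : nat -> Y -> Prop) (y0 : Y) k :
  (forall i, i < k -> exists y, P i y) ->
  exists ys, size ys = k /\ forall i, i < k -> P i (nth y0 ys i).
Proof.
elim: k => [|k IH] exP; first by exists [::].
have [ys [size_ys P_ys]] := IH (fun i lt_i => exP i (ltnW lt_i)).
have [y P_y] := exP k (leqnn _).
exists (rcons ys y); rewrite size_rcons size_ys; split => // i.
rewrite ltnS leq_eqVlt nth_rcons size_ys => /orP[/eqP -> | lt_i]; first by rewrite ltnn eqxx.
by rewrite lt_i; apply: P_ys.
Qed.

Lemma Forall2_nth (A B : Type) (P : A -> B -> Prop) a0 b0 (s : seq A) (t : seq B) :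
  size s = size t -> (forall i, i < size s -> P (nth a0 s i) (nth b0 t i)) ->
  List.Forall2 P s t.
Proof.
elim: s t => [|a s IH] [|b t] //= [size_st] P_st; constructor; first exact: (P_st 0).
by apply: IH => // i; apply: (P_st i.+1).
Qed.

Lemma PermutationP (T : eqType) (s1 s2 : seq T) :
  reflect (Permutation.Permutation s1 s2) (perm_eq s1 s2).
Proof.
apply: (iffP idP); last first.
  elim=> [|x ? ? _ IH | x y ? | ? ? ? _ IH1 _ IH2]; rewrite ?perm_cons //.
  - by apply/permP => a /=; rewrite addnCA.
  - exact: perm_trans IH1 IH2.
elim: s1 s2 => [|x s1 IH] s2; first by rewrite perm_sym => /perm_nilP ->.
move=> perm_s; have x_s2 : x \in s2 by rewrite -(perm_mem perm_s) mem_head.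
move: perm_s; case/splitPr: x_s2 => s2a s2b perm_s.
apply: Permutation.perm_trans (Permutation.Permutation_middle _ _ _).
apply/Permutation.perm_skip/IH; rewrite -(perm_cons x); apply: (perm_trans perm_s).
by apply/permP => a /=; rewrite !count_cat /= addnCA.
Qed.

Lemma perm_pick_by_key (T K : eqType) (key : T -> K) (x0 : T) (xs : seq T) (ks : seq K) :
  perm_eq (map key xs) ks -> uniq ks ->
  perm_eq xs [seq nth x0 xs (index k (map key xs)) | k <- ks].
Proof.
move=> perm_ks uniq_ks; have uniq_xs : uniq (map key xs) by rewrite (perm_uniq perm_ks).
set pick := fun k => nth x0 xs (index k (map key xs)).
have pickK : map pick (map key xs) = xs.
  rewrite -map_comp; apply: (@eq_from_nth _ x0); rewrite size_map // => i lt_i.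
  by rewrite (nth_map x0) //= /pick -(nth_map x0 (key x0)) // index_uniq ?size_map.
by rewrite -{1}pickK perm_map.
Qed.

Lemma rcons_cat_inj (s p q : seq nat) i j : rcons s i ++ p = rcons s j ++ q -> i = j.
Proof. by move/(congr1 (nth 0 ^~ (size s))); rewrite !cat_rcons !nth_cat ltnn subnn. Qed.

Section PartialSums.
Variable F : numFieldType.
Local Open Scope ring_scope.
Implicit Types p q : {poly F}.

Lemma diff_powX d :
  let D : {poly F} := ('X + 1) ^+ d.+1 - 'X ^+ d.+1 in
  (size D <= d.+1)%N /\ D`_d = d.+1%:R.
Proof.
elim: d => [|d [IHs IHc]] /=; first by rewrite !expr1 addrC addKr size_poly1 coefC.
set D := ('X + 1) ^+ d.+1 - 'X ^+ d.+1 : {poly F}.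
have -> : ('X + 1) ^+ d.+2 - 'X ^+ d.+2 = D * 'X + ('X + 1) ^+ d.+1 :> {poly F}.
  by rewrite /D !exprSr; ring.
have XD1 : ('X + 1 : {poly F}) = 'X - (-1)%:P by rewrite polyCN opprK.
have size_XD1 : size (('X + 1 : {poly F}) ^+ d.+1) = d.+2 by rewrite XD1 size_exp_XsubC.
split.
  apply: leq_trans (size_polyD _ _) _; rewrite geq_max size_XD1 leqnn andbT.
  have [->|D0] := eqVneq D 0; first by rewrite mul0r size_poly0.
  by rewrite size_mulX.
have /monicP : ('X + 1 : {poly F}) ^+ d.+1 \is monic.
  by apply: monic_exp; rewrite XD1 monicXsubC.
by rewrite coefD coefMX /= /lead_coef size_XD1 => ->; rewrite IHc natr1.
Qed.

Lemma antidifference d q : (size q <= d)%N ->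
  exists p, [/\ (size p <= d.+1)%N, p`_d = q`_d.-1 / d%:R &
    forall x, p.[x + 1] - p.[x] = q.[x]].
Proof.
elim: d q => [|d IH] q size_q.
  move: size_q; rewrite leqn0 size_poly_eq0 => /eqP ->.
  by exists 0; rewrite size_poly0 coef0 mul0r; split => // x; rewrite !horner0 subrr.
set c := q`_d / d.+1%:R.
have [size_D coef_D] := diff_powX d.
have size_q' : (size (q - c *: (('X + 1) ^+ d.+1 - 'X ^+ d.+1))%R <= d)%N.
  apply/leq_sizeP => i; rewrite leq_eqVlt => /orP[/eqP <-|lt_di].
    by rewrite coefB coefZ coef_D mulfVK ?subrr ?pnatr_eq0.
  move/leq_sizeP: size_q => /(_ i lt_di) q_i; move/leq_sizeP: size_D => /(_ i lt_di) D_i.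
  by rewrite coefB coefZ q_i D_i mulr0 subrr.
have [p [size_p coef_p diff_p]] := IH _ size_q'.
exists (c *: 'X^(d.+1) + p); split.
- apply: leq_trans (size_polyD _ _) _; rewrite geq_max (leq_trans size_p) // andbT.
  by apply: leq_trans (size_scale_leq _ _) _; rewrite size_polyXn.
- rewrite coefD coefZ coefXn eqxx mulr1.
  by move/leq_sizeP: size_p => ->; rewrite ?addr0.
- move=> x; rewrite !hornerE; have -> : p.[x + 1] = (p.[x + 1] - p.[x]) + p.[x] by rewrite subrK.
  by rewrite diff_p !(hornerD, hornerN, hornerZ, horner_exp, hornerX, hornerC, hornerXn); ring.
Qed.

Lemma poly_partial_sum q d : size q = d.+1 ->
  exists p, [/\ size p = d.+2, lead_coef p = lead_coef q / d.+1%:R &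
    forall n : nat, p.[n%:R] = \sum_(j < n.+1) q.[j%:R]].
Proof.
move=> size_q; have [a [size_a coef_a diff_a]] := @antidifference d.+1 q (eq_leq size_q).
have lead_q : lead_coef q = q`_d by rewrite /lead_coef size_q.
have q_d0 : q`_(d.+1) = 0 by move/leq_sizeP: (eq_leq size_q); apply.
have q_d : q`_d != 0 by rewrite -lead_q lead_coef_eq0 -size_poly_eq0 size_q.
set p := a + q - (a.[0])%:P.
have coef_p : p`_d.+1 = q`_d / d.+1%:R.
  by rewrite /p coefB coefD coefC /= coef_a q_d0 addr0 subr0.
have size_p : size p = d.+2.
  apply/eqP; rewrite eqn_leq; apply/andP; split; last first.
    by rewrite ltnNge; apply: contra q_d => /leq_sizeP/(_ d.+1 (leqnn _));
      rewrite coef_p => /eqP; rewrite mulf_eq0 invr_eq0 pnatr_eq0 orbF.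
  rewrite /p; apply: leq_trans (size_polyD _ _) _; rewrite geq_max size_polyN size_polyC.
  rewrite (leq_trans (leq_b1 _)) // andbT; apply: leq_trans (size_polyD _ _) _.
  by rewrite geq_max size_a size_q ltnW.
exists p; split => //; first by rewrite lead_q /lead_coef size_p coef_p.
elim=> [|n IHn]; first by rewrite big_ord1 /p !hornerE addrAC subrr add0r.
rewrite big_ord_recr /= -IHn /p !hornerE -natr1.
have -> : a.[n%:R + 1] = (a.[n%:R + 1] - a.[n%:R]) + a.[n%:R] by rewrite subrK.
by rewrite diff_a; ring.
Qed.

End PartialSums.

Definition poly_valued (f : nat -> nat) (d c : nat) : Prop :=
  exists p : {poly rat}, [/\ size p = d.+1, lead_coef p = (c%:R)^-1 &
    forall n, p.[n%:R] = (f n)%:R]%R.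

Lemma poly_valued1 : poly_valued (fun=> 1) 0 1.
Proof.
by exists 1%R; rewrite size_poly1 lead_coef1 invr1; split => // n; rewrite hornerE.
Qed.

Lemma poly_valuedM f g d e b c : poly_valued f d b -> poly_valued g e c ->
  poly_valued (fun n => f n * g n) (d + e) (b * c).
Proof.
move=> [p [size_p lead_p val_p]] [q [size_q lead_q val_q]].
have lead_pq : (lead_coef p * lead_coef q != 0)%R.
  by rewrite mulf_neq0 // lead_coef_eq0 -size_poly_eq0 ?size_p ?size_q.
exists (p * q)%R; split.
- by rewrite size_proper_mul // size_p size_q addnS.
- by rewrite lead_coefM lead_p lead_q natrM invfM.
- by move=> n; rewrite hornerM val_p val_q natrM.
Qed.

Lemma poly_valued_partial_sum f d c : poly_valued f d c ->
  poly_valued (fun n => \sum_(j < n.+1) f j) d.+1 (d.+1 * c).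
Proof.
move=> [q [size_q lead_q val_q]]; have [p [size_p lead_p val_p]] := poly_partial_sum size_q.
exists p; split => //; first by rewrite lead_p lead_q natrM invfM mulrC.
by move=> n; rewrite val_p natr_sum; apply: eq_bigr => j _; rewrite val_q.
Qed.

Fixpoint nshuffles (u : tree) (r : nat) : nat :=
  if u is Vx ts then \sum_(j < r.+1) foldr muln 1 [seq nshuffles t j | t <- ts] else 1.

Lemma poly_valued_nshuffles u : poly_valued (nshuffles u) (nvert u) (tfact u).
Proof.
elim/tree_nth_ind: u => [|ts IH]; first exact: poly_valued1.
have -> : tfact (Vx ts) = (sumn (map nvert ts)).+1 * foldr muln 1 (map tfact ts) by [].
apply: (@poly_valued_partial_sum (fun j => foldr muln 1 [seq nshuffles t j | t <- ts])).
elim: ts IH => [|t ts IHts] IH; first exact: poly_valued1.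
by apply: (poly_valuedM (IH 0 isT)); apply: IHts => i; apply: (IH i.+1).
Qed.

Lemma sub_cat S s p : sub S (s ++ p) = if sub S s is Some u then sub u p else None.
Proof. by elim: s S => [|i s IH] [|ts] //=; case: ifP. Qed.

Lemma sub_rcons S s ts i : sub S s = Some (Vx ts) -> i < size ts ->
  sub S (rcons s i) = Some (nth Eta ts i).
Proof. by move=> sub_s lt_i; rewrite -cats1 sub_cat sub_s /= lt_i. Qed.

Lemma is_edge_cons ts i p :
  is_edge (Vx ts) (i :: p) = (i < size ts) && is_edge (nth Eta ts i) p.
Proof. by rewrite /is_edge /=; case: ifP. Qed.

Lemma is_leaf_cons ts i p :
  is_leaf (Vx ts) (i :: p) = (i < size ts) && is_leaf (nth Eta ts i) p.
Proof. by rewrite /is_leaf /=; case: ifP. Qed.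

Lemma sub_lin n k : k <= n -> sub (lin n) (nseq k 0) = Some (lin (n - k)).
Proof. by elim: k n => [|k IH] [|n] //= lt_kn; rewrite IH. Qed.

Lemma is_leaf_lin n t : is_leaf (lin n) t = (t == nseq n 0).
Proof.
elim: n t => [|n IH] [|[|i] t] //; rewrite /is_leaf /= -[RHS]/(t == nseq n 0).
exact: IH.
Qed.

Lemma above_lin n m : m <= n ->
  above (lin n) (nseq m 0) = if m < n then [:: nseq m.+1 0] else [::].
Proof.
rewrite /above leq_eqVlt => /orP[/eqP -> | lt_mn]; first by rewrite sub_lin // subnn ltnn.
rewrite lt_mn sub_lin ?(ltnW lt_mn) // -(subnSK lt_mn) /=.
by elim: (m) {lt_mn} => //= k [->].
Qed.

Definition ltree0 : ltree label := LT ([::], [::]) [::].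

(* [canonical_shuffle u s m r B]: [B] is the canonical shuffle of [u], whose
   root edge is labelled [s], with a linear tree of [r] vertices whose root edge
   is labelled [nseq m 0]; the children of a vertex of [u] are in planar order.
   Here [u] is the subtree of [S] at [s], and the linear tree the part of [L_n]
   above its edge [nseq m 0]. *)
Inductive canonical_shuffle : tree -> seq nat -> nat -> nat -> ltree label -> Prop :=
| CanonLeaf s m : canonical_shuffle Eta s m 0 (LT (s, nseq m 0) [::])
| CanonStepL u s m r b : canonical_shuffle u s m.+1 r b ->
    canonical_shuffle u s m r.+1 (LT (s, nseq m 0) [:: b])
| CanonStepS ts s m r cs : 0 < size ts -> size cs = size ts ->
    (forall i, i < size ts ->
       canonical_shuffle (nth Eta ts i) (rcons s i) m r (nth ltree0 cs i)) ->
    canonical_shuffle (Vx ts) s m r (LT (s, nseq m 0) cs).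

Lemma canonical_inv u s m r B : canonical_shuffle u s m r B ->
  [\/ [/\ u = Eta, r = 0 & B = LT (s, nseq m 0) [::]],
      exists r' b, [/\ r = r'.+1, B = LT (s, nseq m 0) [:: b]
                     & canonical_shuffle u s m.+1 r' b] |
      exists ts cs, [/\ u = Vx ts, size cs = size ts, B = LT (s, nseq m 0) cs, 0 < size ts &
        forall i, i < size ts ->
          canonical_shuffle (nth Eta ts i) (rcons s i) m r (nth ltree0 cs i)]].
Proof.
by case=> [s' m' | u' s' m' r' b ? | ts s' m' r' cs ? ? ?];
  [apply: Or31 | apply: Or32; exists r', b | apply: Or33; exists ts, cs].
Qed.

Lemma canonical_lab u s m r B : canonical_shuffle u s m r B -> lab B = (s, nseq m 0).
Proof. by case. Qed.

Lemma canonical_labels u s m r B x : canonical_shuffle u s m r B -> x \in labels B ->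
  exists p k, [/\ x = (s ++ p, nseq k 0), is_edge u p & m <= k <= m + r].
Proof.
move=> canon_B; elim: canon_B x => {u s m r B}
  [s m | u s m r b _ IH | ts s m r cs _ size_cs _ IH] x.
- by rewrite /= inE ?orbF => /eqP ->; exists [::], m; rewrite cats0 addn0 leqnn.
- rewrite /= inE cats0 => /orP[/eqP -> | /IH [p [k [-> edge_p /andP[lt_mk le_k]]]]].
    by exists [::], m; rewrite cats0 leqnn leq_addr.
  by exists p, k; rewrite ltnW // addnS.
- rewrite /= inE => /orP[/eqP -> | /(flatten_map_nthP _ ltree0) [i]].
    by exists [::], m; rewrite cats0 leqnn leq_addr.
  rewrite size_cs => lt_i /IH [//| p [k [-> edge_p le_k]]].
  by exists (i :: p), k; rewrite cat_rcons is_edge_cons lt_i.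
Qed.

Lemma leaf_labels_LT l (cs : seq (ltree label)) : cs != [::] ->
  leaf_labels (LT l cs) = flatten (map (@leaf_labels label) cs).
Proof. by case: cs. Qed.

Lemma canonical_leaf_labels u s m r B x : canonical_shuffle u s m r B ->
  x \in leaf_labels B <-> exists2 p, x = (s ++ p, nseq (m + r) 0) & is_leaf u p.
Proof.
move=> canon_B; elim: canon_B x => {u s m r B}
  [s m | u s m r b _ IH | ts s m r cs ts0 size_cs _ IH] x.
- rewrite inE addn0; split => [/eqP -> | [[|? ?] -> //]]; first by exists [::]; rewrite ?cats0.
  by rewrite cats0.
- by rewrite /= cats0 -addSnnS; apply: IH.
- rewrite leaf_labels_LT -?size_eq0 ?size_cs -?lt0n //; split.
    case/(flatten_map_nthP _ ltree0) => i; rewrite size_cs => lt_i.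
    case/(IH i lt_i x) => p -> leaf_p.
    by exists (i :: p); rewrite ?cat_rcons // is_leaf_cons lt_i.
  case=> -[|i p] -> //; rewrite is_leaf_cons => /andP[lt_i leaf_p].
  apply/(flatten_map_nthP _ ltree0); exists i; rewrite ?size_cs // (IH i lt_i).
  by exists p; rewrite ?cat_rcons.
Qed.

Lemma canonical_leaf_labels_uniq u s m r B : canonical_shuffle u s m r B ->
  uniq (leaf_labels B).
Proof.
elim=> {u s m r B} // [u s m r b _ IH | ts s m r cs ts0 size_cs canon_cs IH].
  by rewrite /= cats0.
rewrite leaf_labels_LT -?size_eq0 ?size_cs -?lt0n //.
apply: (uniq_flatten_map_nth (x0 := ltree0)) => [i | i j x]; rewrite size_cs; first exact: IH.
move=> lt_i lt_j /(canonical_leaf_labels x (canon_cs i lt_i)) [p -> _].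
by case/(canonical_leaf_labels _ (canon_cs j lt_j)) => q [/rcons_cat_inj].
Qed.

Definition shuffle_node (S T : tree) (x : label) (ls : seq label) : bool :=
  let: (s, t) := x in
  [|| ls == [::],
      perm_eq ls [seq (s', t) | s' <- above S s]
    | perm_eq ls [seq (s, t') | t' <- above T t]].

Lemma canonical_nodes S n u s m r B : canonical_shuffle u s m r B ->
  sub S s = Some u -> m + r = n -> all_nodes (shuffle_node S (lin n)) B.
Proof.
elim=> {u s m r B} // [u s m r b canon_b IH | ts s m r cs _ size_cs canon_cs IH] sub_s mrn /=.
  have lt_mn : m < n by rewrite -mrn addnS ltnS leq_addr.
  rewrite (canonical_lab canon_b) above_lin ?(ltnW lt_mn) // lt_mn perm_refl !orbT.
  by rewrite IH // addSnnS.
have -> : map (@lab label) cs = [seq (s', nseq m 0) | s' <- above S s].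
  rewrite /above sub_s -map_comp; apply: (@eq_from_nth _ ([::], [::])).
    by rewrite !size_map size_iota.
  move=> i; rewrite size_map => lt_i.
  rewrite (nth_map ltree0) // (nth_map 0) ?size_iota -?size_cs // nth_iota -?size_cs //.
  by rewrite (canonical_lab (canon_cs i _)) -?size_cs.
rewrite perm_refl orbT /=; apply/(all_nthP ltree0) => i; rewrite size_cs => lt_i.
exact: IH i lt_i (sub_rcons sub_s lt_i) mrn.
Qed.

Lemma canonical_is_shuffle S n B : canonical_shuffle S [::] 0 n B -> is_shuffle S (lin n) B.
Proof.
move=> canon_B; split.
- exact: canonical_lab canon_B.
- move=> x /(canonical_labels canon_B) [p [k [-> edge_p /andP[_ le_kn]]]].
  by rewrite /= edge_p /is_edge sub_lin.
- exact: canonical_leaf_labels_uniq canon_B.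
- move=> s t; apply/idP/idP => [/(canonical_leaf_labels _ canon_B) [p [-> ->] leaf_p] |].
    by rewrite /= leaf_p is_leaf_lin add0n eqxx.
  case/andP=> leaf_s; rewrite is_leaf_lin => /eqP ->.
  by apply/(canonical_leaf_labels _ canon_B); exists s; rewrite ?add0n.
- exact: canonical_nodes canon_B (erefl _) (add0n n).
Qed.

Definition root_first (E : tree -> seq nat -> nat -> nat -> seq (ltree label))
    (u : tree) (s : seq nat) (m r : nat) : seq (ltree label) :=
  match u with
  | Eta => if r is 0 then [:: LT (s, nseq m 0) [::]] else [::]
  | Vx ts => [seq LT (s, nseq m 0) cs
             | cs <- cart_prod (mapi (fun i t => E t (rcons s i) m r) 0 ts)]
  end.

Fixpoint canonical_enum (u : tree) (s : seq nat) (m r : nat) {struct u} : seq (ltree label) :=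
  (fix step_first m r := root_first canonical_enum u s m r ++
     if r is r'.+1 then [seq LT (s, nseq m 0) [:: b] | b <- step_first m.+1 r'] else [::]) m r.

Lemma canonical_enumE u s m r : canonical_enum u s m r =
  root_first canonical_enum u s m r ++
  if r is r'.+1 then [seq LT (s, nseq m 0) [:: b] | b <- canonical_enum u s m.+1 r'] else [::].
Proof. by case: u; case: r. Qed.

Lemma root_first_Vx E ts s m r : root_first E (Vx ts) s m r =
  [seq LT (s, nseq m 0) cs
  | cs <- cart_prod [seq E (nth Eta ts i) (rcons s i) m r | i <- iota 0 (size ts)]].
Proof. by rewrite /= (mapiE _ Eta). Qed.

Lemma canonical_enum_lab u s m r B : B \in canonical_enum u s m r -> lab B = (s, nseq m 0).
Proof.
rewrite canonical_enumE mem_cat => /orP[|]; last by case: r => // r /mapP [b _ ->].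
case: u => [|ts]; last by rewrite root_first_Vx => /mapP [cs _ ->].
by case: r => //=; rewrite inE => /eqP ->.
Qed.

Lemma size_canonical_enum u s m r : size (canonical_enum u s m r) = nshuffles u r.
Proof.
elim/tree_nth_ind: u s m r => [|ts IH] s m r.
  by elim: r m => [|r IHr] m //; rewrite canonical_enumE /= size_map IHr.
have size_root r' m' : size (root_first canonical_enum (Vx ts) s m' r') =
    foldr muln 1 [seq nshuffles t r' | t <- ts].
  rewrite root_first_Vx size_map size_cart_prod -map_comp -[in RHS](mkseq_nth Eta ts) -map_comp.
  congr foldr; apply/eq_in_map => i; rewrite mem_iota => /andP[_ lt_i] /=; exact: IH.
elim: r m => [|r IHr] m; rewrite canonical_enumE size_cat size_root ?size_map ?IHr.
  by rewrite /= big_ord1 addn0.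
by rewrite /= [in RHS]big_ord_recr addnC.
Qed.

Lemma canonical_enum_uniq u s m r : uniq (canonical_enum u s m r).
Proof.
elim/tree_nth_ind: u s m r => [|ts IH] s m r.
  by elim: r m => [|r IHr] m //; rewrite canonical_enumE /= map_inj_uniq ?IHr // => b b' [].
have uniq_root m' r' : uniq (root_first canonical_enum (Vx ts) s m' r').
  rewrite root_first_Vx map_inj_uniq ?cart_prod_uniq // => [|cs cs' [] //].
  apply/(all_nthP [::]) => i; rewrite size_map size_iota => lt_i.
  by rewrite (nth_map 0) ?size_iota // nth_iota //; exact: IH.
elim: r m => [|r IHr] m; rewrite canonical_enumE ?cats0 // cat_uniq uniq_root.
rewrite map_inj_uniq ?IHr ?andbT => [|b b' [] //].
apply/hasPn => _ /mapP [b b_step ->]; rewrite root_first_Vx.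
apply/negP => /mapP [cs /(mem_cart_prod ltree0) [size_cs mem_cs] [cs_b]].
move: size_cs mem_cs; rewrite -cs_b size_map size_iota => ts1 /(_ 0).
rewrite -ts1 (nth_map 0) // => /(_ isT) /canonical_enum_lab.
by rewrite (canonical_enum_lab b_step) => -[/(congr1 size)]; rewrite size_rcons => /n_Sn.
Qed.

Lemma canonical_enumP u s m r B : wf u ->
  B \in canonical_enum u s m r <-> canonical_shuffle u s m r B.
Proof.
move=> wf_u; split; last first.
  elim=> {u s m r B wf_u} [s m | u s m r b _ IH | ts s m r cs _ size_cs _ IH];
    rewrite canonical_enumE mem_cat.
  - by rewrite /= inE eqxx.
  - by rewrite map_f ?orbT.
  rewrite root_first_Vx map_f //; apply/(mem_cart_prod ltree0); rewrite size_map size_iota.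
  by split=> // i lt_i; rewrite (nth_map 0) ?size_iota // nth_iota //; exact: IH.
elim/tree_nth_ind: u wf_u s m r B => [|ts IH] wf_u s m r B.
  elim: r m B => [|r IHr] m B; rewrite canonical_enumE mem_cat /=.
    by rewrite inE orbF => /eqP ->; constructor.
  by case/mapP => b /IHr canon_b ->; constructor.
case/andP: wf_u => ts0 /(all_nthP Eta) wf_ts; rewrite -lt0n in ts0.
have root_canon m' r' B' : B' \in root_first canonical_enum (Vx ts) s m' r' ->
    canonical_shuffle (Vx ts) s m' r' B'.
  rewrite root_first_Vx => /mapP [cs /(mem_cart_prod ltree0) []].
  rewrite size_map size_iota => size_cs mem_cs ->; constructor => // i lt_i.
  apply/(IH i lt_i (wf_ts i lt_i)); move: (mem_cs i lt_i).
  by rewrite (nth_map 0) ?size_iota // nth_iota.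
elim: r m B => [|r IHr] m B; rewrite canonical_enumE mem_cat.
  by case/orP => [/root_canon | ]; rewrite ?in_nil.
case/orP => [/root_canon // | ].
by case/mapP => b /IHr canon_b ->; constructor.
Qed.

Lemma liso_LT (L : Type) l (cs bs : seq (ltree L)) :
  List.Forall2 (@liso L) cs bs -> liso (LT l cs) (LT l bs).
Proof. exact: liso_intro (Permutation.Permutation_refl _). Qed.

Lemma liso_refl (L : Type) (A : ltree L) : liso A A.
Proof.
elim/ltree_forall_ind: A => l cs IH; apply: liso_LT.
by elim: IH => // c cs' ? _ ?; constructor.
Qed.

Lemma liso_inv (L : Type) l (cs : seq (ltree L)) B : liso (LT l cs) B ->
  exists cs' cs'', [/\ B = LT l cs', Permutation.Permutation cs' cs''
                     & List.Forall2 (@liso L) cs cs''].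
Proof. by inversion 1; exists cs', cs''. Qed.

Lemma liso_labels (L : eqType) (A B : ltree L) : liso A B -> labels A =i labels B.
Proof.
elim/(@ltree_ind L): A B => l cs IH B.
case/(@liso_inv L) => cs' [cs'' [-> /PermutationP perm_cs F_cs]] x.
rewrite /= !inE; congr (_ || _).
rewrite (perm_mem (perm_flatten (perm_map _ perm_cs))) {perm_cs cs'}.
elim: F_cs IH => //= c c' {}cs {}cs'' liso_c _ IHF IH.
rewrite !mem_cat (IH c (mem_head _ _) _ liso_c) IHF // => d d_cs.
by apply: IH; rewrite inE d_cs orbT.
Qed.

Lemma canonical_depth u s m r B x : canonical_shuffle u s m r B ->
  x \in labels B -> m <= size x.2.
Proof.
by move=> canon_B /(canonical_labels canon_B) [p [k [-> _ /andP[le_mk _]]]]; rewrite size_nseq.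
Qed.

Lemma canonical_prefix u s m r B x : canonical_shuffle u s m r B ->
  x \in labels B -> take (size s) x.1 = s.
Proof. by move=> canon_B /(canonical_labels canon_B) [p [k [-> _ _]]]; rewrite take_size_cat. Qed.

Lemma canonical_step_labels u s m r b x : canonical_shuffle u s m.+1 r b ->
  (x \in labels b) = (x != (s, nseq m 0)) && (x \in labels (LT (s, nseq m 0) [:: b])).
Proof.
move=> canon_b; rewrite /= inE cats0; case: eqP => [-> | _] //=.
by apply/negP => /(canonical_depth canon_b); rewrite size_nseq ltnn.
Qed.

Lemma canonical_child_labels ts s m r cs i x : size cs = size ts ->
  (forall j, j < size ts ->
     canonical_shuffle (nth Eta ts j) (rcons s j) m r (nth ltree0 cs j)) ->
  i < size ts ->
  (x \in labels (nth ltree0 cs i)) =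
    (take (size s).+1 x.1 == rcons s i) && (x \in labels (LT (s, nseq m 0) cs)).
Proof.
move=> size_cs canon_cs lt_i; apply/idP/andP => [x_i | [prefix_x]].
  rewrite -(size_rcons s i) (canonical_prefix (canon_cs i lt_i) x_i) eqxx /= inE.
  split => //; apply/orP; right.
  by apply/(flatten_map_nthP _ ltree0); exists i; rewrite ?size_cs.
rewrite /= inE => /orP[/eqP x_root | /(flatten_map_nthP _ ltree0) [j]].
  move: prefix_x; rewrite x_root take_oversize // => /eqP/(congr1 size).
  by rewrite size_rcons => /n_Sn.
rewrite size_cs => lt_j x_j; move: prefix_x.
by rewrite -(size_rcons s j) (canonical_prefix (canon_cs j lt_j) x_j) => /eqP/rcons_inj [<-].
Qed.

Lemma canonical_step_expand_labels u ts s m r r' b cs :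
  canonical_shuffle u s m.+1 r' b -> 0 < size ts -> size cs = size ts ->
  (forall i, i < size ts ->
     canonical_shuffle (nth Eta ts i) (rcons s i) m r (nth ltree0 cs i)) ->
  ~ labels (LT (s, nseq m 0) [:: b]) =i labels (LT (s, nseq m 0) cs).
Proof.
move=> canon_b ts0 size_cs canon_cs /(_ (rcons s 0, nseq m 0)).
have -> : (rcons s 0, nseq m 0) \in labels (LT (s, nseq m 0) cs).
  rewrite /= inE; apply/orP; right.
  apply/(flatten_map_nthP _ ltree0); exists 0; rewrite ?size_cs //.
  by case: (nth _ cs 0) (canonical_lab (canon_cs 0 ts0)) => l cs0 /= ->; rewrite mem_head.
rewrite /= inE cats0 => /orP[/eqP [/(congr1 size)] | /(canonical_depth canon_b)].
  by rewrite size_rcons => /esym/n_Sn.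
by rewrite size_nseq ltnn.
Qed.

Lemma canonical_labels_inj u s m r B1 B2 :
  canonical_shuffle u s m r B1 -> canonical_shuffle u s m r B2 ->
  labels B1 =i labels B2 -> B1 = B2.
Proof.
move=> canon1; elim: canon1 B2 => {u s m r B1}
  [s m | u s m r b1 canon_b1 IH | ts s m r cs1 ts0 size_cs1 canon_cs1 IH] B2 /canonical_inv.
- by case=> [[_ _ ->] | [r' [b2 []]] | [ts [cs2 []]]].
- case=> [[_ ?] // | [r' [b2 [[<-] -> canon_b2]]] same
         | [ts [cs2 [_ size_cs2 -> ts0 canon_cs2]]] same].
    congr (LT _ [:: _]); apply: (IH _ canon_b2) => x.
    by rewrite (canonical_step_labels x canon_b1) (canonical_step_labels x canon_b2) same.
  by case: (canonical_step_expand_labels canon_b1 ts0 size_cs2 canon_cs2).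
case=> [[] // | [r' [b2 [_ -> canon_b2]]] same | [ts' [cs2 [[<-] size_cs2 -> _ canon_cs2]]] same].
  by case: (canonical_step_expand_labels canon_b2 ts0 size_cs1 canon_cs1) => x; rewrite same.
congr LT; apply: (@eq_from_nth _ ltree0) => [|i]; rewrite ?size_cs1 ?size_cs2 // => lt_i.
apply: (IH i lt_i _ (canon_cs2 i lt_i)) => x.
by rewrite (canonical_child_labels x size_cs1 canon_cs1 lt_i)
  (canonical_child_labels x size_cs2 canon_cs2 lt_i) same.
Qed.

Lemma liso_canonical_expand ts s m r cs :
  cs != [::] ->
  perm_eq (map (@lab label) cs) [seq (rcons s i, nseq m 0) | i <- iota 0 (size ts)] ->
  (forall c i, c \in cs -> lab c = (rcons s i, nseq m 0) -> i < size ts ->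
     exists2 b, canonical_shuffle (nth Eta ts i) (rcons s i) m r b & liso c b) ->
  exists2 B, canonical_shuffle (Vx ts) s m r B & liso (LT (s, nseq m 0) cs) B.
Proof.
move=> cs0 perm_cs canon_c.
set key := fun i => (rcons s i, nseq m 0).
pose c i := nth ltree0 cs (index (key i) (map (@lab label) cs)).
have c_cs i : i < size ts -> c i \in cs /\ lab (c i) = key i.
  move=> lt_i; have key_i : key i \in map (@lab label) cs.
    by rewrite (perm_mem perm_cs) map_f // mem_iota.
  rewrite /c mem_nth -?(size_map (@lab label)) ?index_mem //.
  by rewrite -(nth_map _ (lab ltree0)) ?nth_index // -(size_map (@lab label)) index_mem.
have [bs [size_bs canon_bs]] : exists bs, size bs = size ts /\ forall i, i < size ts ->
    canonical_shuffle (nth Eta ts i) (rcons s i) m r (nth ltree0 bs i) /\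
    liso (c i) (nth ltree0 bs i).
  apply: (@nth_choice _
    (fun i b => canonical_shuffle (nth Eta ts i) (rcons s i) m r b /\ liso (c i) b) ltree0).
  move=> i lt_i; have [c_i lab_c] := c_cs i lt_i.
  by have [b] := canon_c _ _ c_i lab_c lt_i; exists b.
have ts0 : 0 < size ts.
  by move: (perm_size perm_cs); rewrite !size_map size_iota => <-; rewrite lt0n size_eq0.
exists (LT (s, nseq m 0) bs); first by constructor => // i /canon_bs [].
have /PermutationP perm_c : perm_eq [seq c i | i <- iota 0 (size ts)] cs.
  have uniq_keys : uniq [seq key i | i <- iota 0 (size ts)].
    by rewrite map_inj_uniq ?iota_uniq // => i j [/rcons_inj []].
  by have := perm_pick_by_key ltree0 perm_cs uniq_keys; rewrite perm_sym -map_comp.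
have liso_c : List.Forall2 (@liso label) [seq c i | i <- iota 0 (size ts)] bs.
  apply: (Forall2_nth (a0 := ltree0) (b0 := ltree0)); rewrite size_map size_iota // => i lt_i.
  by rewrite (nth_map 0) ?size_iota // nth_iota //; case: (canon_bs i lt_i).
have [bs' [perm_bs liso_cs]] := Permutation.Permutation_Forall2 perm_c liso_c.
exact: liso_intro perm_bs liso_cs.
Qed.

Lemma shuffle_canonical S n (A : ltree label) s m u :
  all_nodes (shuffle_node S (lin n)) A ->
  {subset leaf_labels A <= [pred x | is_leaf S x.1 && is_leaf (lin n) x.2]} ->
  lab A = (s, nseq m 0) -> sub S s = Some u -> m <= n ->
  exists2 B, canonical_shuffle u s m (n - m) B & liso A B.
Proof.
elim/(@ltree_ind label): A s m u => l cs IH s m u /andP[node_l nodes_cs] leaves_A.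
move=> /= lab_A sub_s le_mn; subst l.
have [cs_nil | cs0] := eqVneq cs [::].
  have /andP[] : (s, nseq m 0) \in [pred x | is_leaf S x.1 && is_leaf (lin n) x.2].
    by apply: leaves_A; rewrite cs_nil mem_head.
  rewrite /= is_leaf_lin {1}/is_leaf sub_s => leaf_u /eqP/(congr1 size); rewrite !size_nseq => <-.
  case: u sub_s leaf_u => // _ _; rewrite cs_nil subnn.
  by exists (LT (s, nseq m 0) [::]); [constructor | exact: liso_refl].
have IHc c s' m' u' : c \in cs -> lab c = (s', nseq m' 0) -> sub S s' = Some u' -> m' <= n ->
    exists2 B, canonical_shuffle u' s' m' (n - m') B & liso c B.
  move=> c_cs; apply: IH => //; first exact: (allP nodes_cs).
  move=> x x_c; apply: leaves_A; rewrite leaf_labels_LT //.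
  by apply/flatten_mapP; exists c.
case/or3P: node_l => [/eqP/(congr1 size) | perm_S | perm_L].
- by rewrite size_map => /eqP; rewrite size_eq0 (negbTE cs0).
- case: u sub_s => [|ts] sub_s.
    move: (perm_size perm_S); rewrite /above sub_s size_map => /eqP.
    by rewrite size_eq0 (negbTE cs0).
  apply: liso_canonical_expand => // [|c i c_cs lab_c lt_i].
    by rewrite /above sub_s -map_comp in perm_S.
  exact: IHc c_cs lab_c (sub_rcons sub_s lt_i) le_mn.
- move: perm_L; rewrite above_lin //; case: ltnP => [lt_mn | _] perm_L; last first.
    by move: (perm_size perm_L); rewrite size_map => /eqP; rewrite size_eq0 (negbTE cs0).
  case: cs IH IHc cs0 perm_L {nodes_cs leaves_A} => [|c [|c' cs]] // _ IHc _ perm_L; last first.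
    by move: (perm_size perm_L).
  have lab_c : lab c = (s, nseq m.+1 0).
    by move: (perm_mem perm_L (lab c)); rewrite !inE eqxx => /esym/eqP.
  have [b canon_b liso_cb] := IHc c s m.+1 u (mem_head _ _) lab_c sub_s lt_mn.
  exists (LT (s, nseq m 0) [:: b]); first by rewrite -(subnSK lt_mn); constructor.
  by apply: liso_LT; constructor.
Qed.

Lemma sh_is_nshuffles S n : wf S -> sh_is S (lin n) (nshuffles S n).
Proof.
move=> wf_S; set E := canonical_enum S [::] 0 n.
have size_E : size E = nshuffles S n by rewrite size_canonical_enum.
have canon_E (i : 'I_(nshuffles S n)) : canonical_shuffle S [::] 0 n (nth ltree0 E i).
  by apply/(canonical_enumP _ _ _ _ wf_S)/mem_nth; rewrite size_E.
exists (fun i => nth ltree0 E i); split => [i | i j /liso_labels same | A].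
- exact: canonical_is_shuffle.
- apply/val_inj/eqP.
  rewrite -(nth_uniq ltree0 _ _ (canonical_enum_uniq S [::] 0 n)) ?size_E ?ltn_ord //.
  by apply/eqP/(canonical_labels_inj (canon_E i) (canon_E j)).
case=> lab_A _ _ leaves_A nodes_A.
have [|B canon_B liso_AB] := @shuffle_canonical S n A [::] 0 S nodes_A _ lab_A (erefl _) (leq0n n).
  by case=> s t; rewrite leaves_A.
have B_E : B \in E by apply/(canonical_enumP _ _ _ _ wf_S); rewrite -(subn0 n).
have lt_B : index B E < nshuffles S n by rewrite -size_E index_mem.
by exists (Ordinal lt_B); rewrite /= nth_index.
Qed.

Local Open Scope ring_scope.

Theorem mainTheorem6 (S : tree) (hS : wf S) :
  exists p : {poly rat},
    [/\ size p = (nvert S).+1,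
        lead_coef p = ((tfact S)%:R)^-1 &
        forall n : nat, exists k : nat,
          sh_is S (lin n) k /\ p.[n%:R] = k%:R].
Proof.
have [p [size_p lead_p val_p]] := poly_valued_nshuffles S.
exists p; split => // n; exists (nshuffles S n).
by split; [exact: sh_is_nshuffles | exact: val_p].
Qed.
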